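(* Let $T$ be a square-integrable real random variable and $X=(X_s)_{s\in\mathbb{S}}$ a finite family of random variables (features), and let $f$ be a measurable function with $f(X)=E[T\mid X]$ almost surely. For $S\subseteq\mathbb{S}$ write $X_S=(X_s)_{s\in S}$ and define, for a realisation $(x,t)$ of $(X,T)$, the value function $w_{f(x),t}(S)=\bigl(t-v_{f(x)}(S)\bigr)^2$, where $v_{f(x)}(S)=E[f(X)\mid X_s=x_s,\ s\in S]$, and set $\varphi_j(f,x,t,S)=w_{f(x),t}(S\cup\{j\})-w_{f(x),t}(S)$. Let $\pi$ be a permutation of $\mathbb{S}$, let $j\in\mathbb{S}$ and $R_j=\{i:\pi(i)<\pi(j)\}$. Then $$-E\bigl[\varphi_j(f,X,T,R_j)\bigr]=L_T(X_j)+W_T(X_j;X_{R_j}),$$ where for families of random variables $A,B$: $L_T(A)=\sigma^2(T)-\sigma^2\bigl(T-E[T\mid A]\bigr)$ and $W_T(A;B)=L_T(A,B)-L_T(A)-L_T(B)$ (with $L_T$ of the empty family equal to $0$).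
   Context: $\sigma^2$ denotes variance. $L_T(A,B)$ means $L_T$ applied to the combined family of variables $A$ and $B$. The paper's analysis assumes the model equals (approximately) the conditional expectation of the target, $f(X)\approx E[T\mid X]$, as obtained from mean-squared-error regression. *)

From HB Require Import structures.
From mathcomp Require Import all_boot all_order all_algebra.
From mathcomp Require Import all_classical all_reals all_analysis.
Set Implicit Arguments. Unset Strict Implicit. Unset Printing Implicit Defensive.
Import Order.TTheory GRing.Theory Num.Theory.
Local Open Scope classical_set_scope.
Local Open Scope ring_scope.

Section Defs.
Context (d : measure_display) (Omega : measurableType d) (R : realType)
        (P : probability Omega R).

Definition expect (Y : Omega -> R) : R := fine (\int[P]_x (Y x)%:E)%E.

Definition variance (Y : Omega -> R) : R :=
  expect (fun x => (Y x - expect Y) ^+ 2).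

Definition measurable_wrt (G : set (set Omega)) (Z : Omega -> R) : Prop :=
  forall B : set R, measurable B -> G (Z @^-1` B).

Definition is_condexp (G : set (set Omega)) (Y Z : Omega -> R) : Prop :=
  [/\ measurable_wrt G Z,
      P.-integrable setT (fun x => (Z x)%:E) &
      forall A, G A -> (\int[P]_(x in A) (Z x)%:E = \int[P]_(x in A) (Y x)%:E)%E].

Definition sigmaX (n : nat) (dX : 'I_n -> measure_display)
  (Xsp : forall i, measurableType (dX i)) (X : forall i, Omega -> Xsp i)
  (S : {set 'I_n}) : set (set Omega) :=
  <<s [set A | exists s, s \in S /\
        exists B : set (Xsp s), measurable B /\ A = X s @^-1` B] >>.

Definition LT (T CA : Omega -> R) : R :=
  variance T - variance (fun x => T x - CA x).

End Defs.

From Pilot Require Import Defs.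
From HB Require Import structures.
From mathcomp Require Import all_boot all_order all_algebra.
From mathcomp Require Import fingroup perm.
From mathcomp Require Import all_classical all_reals all_analysis.
From mathcomp Require Import measurable_realfun lebesgue_integral.
From mathcomp Require Import ring lra zify.
Set Implicit Arguments. Unset Strict Implicit. Unset Printing Implicit Defensive.
Import Order.TTheory GRing.Theory Num.Theory.
Local Open Scope classical_set_scope.
Local Open Scope ring_scope.

(* Since [F = E[T | X]], the tower property makes [V S = E[F | X_S]] a version
   of [C S = E[T | X_S]], so [- E[phi] = E[(T - C R_j)^2] - E[(T - C (j |: R_j))^2]].
   As [T - C S] is centred, its variance is its second moment, and the right-hand
   side is [L (j |: R_j) - L R_j = L [set j] + W [set j] R_j].
   The analytic input is that [C S] is square integrable:
   on a [G]-measurable band [{k+1 <= +-C < k+2}], integrating [C] against the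
   band and [2 (k+1) T <= T^2 + (k+1)^2] give [(k+1)^2 P(band) <= E[T^2; band]],
   hence [E[C^2; band] <= 4 E[T^2; band]]; summing over the bands bounds
   [E[C^2]] by [8 E[T^2] + 1]. *)

Section integrable_real.
Context d (Omega : measurableType d) (R : realType).
Variable mu : {measure set Omega -> \bar R}.

Lemma integrableZl_EFin D (k : R) (f : Omega -> R) : measurable D ->
  mu.-integrable D (EFin \o f) -> mu.-integrable D (EFin \o (fun x => k * f x)).
Proof.
by move=> mD /(integrableZl mD k); apply: eq_integrable.
Qed.

Lemma integrable_sqrB (f g : Omega -> R) :
  measurable_fun setT f -> measurable_fun setT g ->
  mu.-integrable setT (EFin \o (fun x => f x ^+ 2)) ->
  mu.-integrable setT (EFin \o (fun x => g x ^+ 2)) ->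
  mu.-integrable setT (EFin \o (fun x => (f x - g x) ^+ 2)).
Proof.
move=> mf mg if2 ig2.
have i2 : mu.-integrable setT (EFin \o (fun x => 2 * f x ^+ 2 + 2 * g x ^+ 2)).
  have := integrableD measurableT
    (integrableZl_EFin 2 measurableT if2) (integrableZl_EFin 2 measurableT ig2).
  by apply: eq_integrable => // x _; rewrite /= EFinD.
apply: le_integrable i2 => //.
  by apply/measurable_EFinP; apply: measurable_funX; exact: measurable_funB.
move=> x _ /=; have fg := sqr_ge0 (f x + g x).
have f2 := sqr_ge0 (f x); have g2 := sqr_ge0 (g x).
by rewrite lee_fin !ger0_norm ?sqr_ge0 //; nra.
Qed.

End integrable_real.

Lemma integrable_of_sqr d (Omega : measurableType d) (R : realType)
    (mu : {finite_measure set Omega -> \bar R}) (f : Omega -> R) :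
  measurable_fun setT f -> mu.-integrable setT (EFin \o (fun x => f x ^+ 2)) ->
  mu.-integrable setT (EFin \o f).
Proof.
move=> mf if2; have i1 := finite_measure_integrable_cst mu 1 measurableT.
apply: le_integrable (integrableD measurableT i1 if2) => //.
- exact/measurable_EFinP.
- move=> x _ /=; rewrite lee_fin [X in _ <= X]ger0_norm ?addr_ge0 ?sqr_ge0 //.
  by have := real_normK (num_real (f x)); nra.
Qed.

Section expectation.
Context d (Omega : measurableType d) (R : realType) (P : probability Omega R).

Lemma expectB (Y1 Y2 : Omega -> R) :
  P.-integrable setT (EFin \o Y1) -> P.-integrable setT (EFin \o Y2) ->
  expect P (fun x => Y1 x - Y2 x) = expect P Y1 - expect P Y2.
Proof. exact: RintegralB. Qed.

Lemma expect_ae_eq (Y1 Y2 : Omega -> R) :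
  measurable_fun setT Y1 -> measurable_fun setT Y2 ->
  {ae P, forall x, Y1 x = Y2 x} -> expect P Y1 = expect P Y2.
Proof.
move=> m1 m2 Y12; congr fine; apply: ae_eq_integral => //.
- exact/measurable_EFinP.
- exact/measurable_EFinP.
- by apply: filterS Y12 => x /= ->.
Qed.

End expectation.

Lemma is_condexp_tower d (Omega : measurableType d) (R : realType)
    (P : probability Omega R) (G G' : set (set Omega)) (Y F V : Omega -> R) :
  G `<=` G' -> is_condexp P G' Y F -> is_condexp P G F V -> is_condexp P G Y V.
Proof.
move=> GG' [_ _ hF] [mV iV hV]; split => // A GA.
by rewrite hV // hF //; exact: GG'.
Qed.

Lemma measurable_condexp d (Omega : measurableType d) (R : realType)
    (P : probability Omega R) (G : set (set Omega)) (Y Z : Omega -> R) :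
  is_condexp P G Y Z -> measurable_fun setT Z.
Proof. by case=> _ /measurable_int/measurable_EFinP. Qed.

Section generated_sigma_algebra.
Context d (Omega : measurableType d) (R : realType) (P : probability Omega R).
Variable Gen : set (set Omega).
Hypothesis Gen_measurable : Gen `<=` measurable.
Local Notation G := (<<s Gen>>).
Local Notation OmegaG := (g_sigma_algebraType Gen).

Lemma sigma_gen_measurable : G `<=` measurable.
Proof. exact: smallest_sub (sigma_algebra_measurable _) Gen_measurable. Qed.

Lemma measurable_wrtP (Z : Omega -> R) :
  measurable_wrt G Z <-> measurable_fun (setT : set OmegaG) (Z : OmegaG -> R).
Proof.
split=> [hZ _ B mB | mZ B mB]; first by rewrite setTI; exact: hZ.
by have := mZ measurableT B mB; rewrite setTI.
Qed.

Lemma measurable_id_sigma_gen : measurable_fun setT (id : Omega -> OmegaG).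
Proof. by move=> _ A GA; rewrite setTI; exact: sigma_gen_measurable. Qed.

(* The restriction of P to G, as the law of the identity Omega -> OmegaG. *)
Let PG := distribution P (mfun_Sub (mem_set measurable_id_sigma_gen)).

Let integral_PG (U : Omega -> R) E :
  measurable_wrt G U -> P.-integrable setT (EFin \o U) -> G E ->
  (\int[PG]_(x in E) (U x)%:E = \int[P]_(x in E) (U x)%:E)%E.
Proof.
move=> /measurable_wrtP mU iU GE; rewrite integral_pushforward //.
- exact/measurable_EFinP.
- by apply: integrableS iU => //; exact: sigma_gen_measurable.
Qed.

Lemma condexp_ae_unique (Y U1 U2 : Omega -> R) :
  is_condexp P G Y U1 -> is_condexp P G Y U2 -> {ae P, forall x, U1 x = U2 x}.
Proof.
move=> [mU1 iU1 hU1] [mU2 iU2 hU2].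
have : ae_eq PG setT (EFin \o U1) (EFin \o U2).
  apply: integral_ae_eq => //.
  - apply: integrable_pushforward => //; exact/measurable_EFinP/measurable_wrtP.
  - exact/measurable_EFinP/measurable_wrtP.
  - by move=> E _ GE; rewrite !integral_PG // hU1 // hU2.
case=> N [GN PN0 sN]; exists N; split => //; first exact: sigma_gen_measurable.
by move=> x /= hx; apply: sN => /= /(_ I) [].
Qed.

Section square_integrable_condexp.
Variables T C : Omega -> R.
Hypothesis mT : measurable_fun setT T.
Hypothesis iT2 : P.-integrable setT (EFin \o (fun x => T x ^+ 2)).
Hypothesis hC : is_condexp P G T C.

Let iT : P.-integrable setT (EFin \o T) := integrable_of_sqr mT iT2.

Let iC : P.-integrable setT (EFin \o C). Proof. by case: hC. Qed.

Let mCG : measurable_fun (setT : set OmegaG) (C : OmegaG -> R).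
Proof. by case: hC => /measurable_wrtP. Qed.

Let integrable_on A (f : Omega -> \bar R) :
  G A -> P.-integrable setT f -> P.-integrable A f.
Proof. by move=> GA; apply: integrableS => //; exact: sigma_gen_measurable. Qed.

Lemma condexp_Rintegral A :
  G A -> \int[P]_(x in A) C x = \int[P]_(x in A) T x.
Proof. by case: hC => _ _ h GA; rewrite /Rintegral h. Qed.

Lemma condexp_level_set_sqr_le (s a : R) (A : set Omega) :
  s ^+ 2 = 1 -> 0 <= a -> G A -> (forall x, A x -> a <= s * C x) ->
  a ^+ 2 * fine (P A) <= \int[P]_(x in A) T x ^+ 2.
Proof.
move=> s2 a0 GA aC; have mA := sigma_gen_measurable GA.
have icst c := finite_measure_integrable_cst P c mA.
have iTA := integrable_on GA iT; have iCA := integrable_on GA iC.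
have iT2A := integrable_on GA iT2.
have lin : a * fine (P A) <= s * \int[P]_(x in A) T x.
  have -> : a * fine (P A) = \int[P]_(x in A) a by rewrite Rintegral_cst.
  rewrite -condexp_Rintegral // -RintegralZl //.
  apply: le_Rintegral => //; first exact: icst.
  exact: integrableZl_EFin.
have quad : \int[P]_(x in A) (2 * a * s * T x) <=
    \int[P]_(x in A) (T x ^+ 2 + a ^+ 2).
  apply: le_Rintegral => //; first exact: integrableZl_EFin.
    have := integrableD mA iT2A (icst (a ^+ 2)).
    by apply: eq_integrable => // x _; rewrite /= EFinD.
  move=> x _; have := sqr_ge0 (T x - a * s).
  have -> : (T x - a * s) ^+ 2 = T x ^+ 2 - 2 * a * s * T x + a ^+ 2 * s ^+ 2.
    by ring.
  by rewrite s2; lra.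
rewrite RintegralZl // RintegralD // ?(Rintegral_cst P mA) in quad; last exact: icst.
have PA0 : 0 <= fine (P A) by apply: fine_ge0.
nra.
Qed.

Definition condexp_band (s : R) (k : nat) : set Omega :=
  [set x | k.+1%:R <= s * C x < k.+2%:R].

Lemma sigma_gen_condexp_band s k : G (condexp_band s k).
Proof.
have -> : condexp_band s k = (fun x => s * C x) @^-1` `[k.+1%:R, k.+2%:R[.
  by apply/seteqP; split => x /=; rewrite in_itv.
apply: (measurable_wrtP _).2 (measurable_itv _).
exact: measurable_funM (measurable_cst _) mCG.
Qed.

Lemma measurable_condexp_band s k : measurable (condexp_band s k).
Proof. exact: sigma_gen_measurable (sigma_gen_condexp_band s k). Qed.

Lemma trivIset_condexp_band s : trivIset setT (condexp_band s).
Proof.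
move=> i j _ _ [x [/andP[ilo ihi] /andP[jlo jhi]]].
have := le_lt_trans ilo jhi; have := le_lt_trans jlo ihi.
by rewrite !ltr_nat => ji ij; apply/eqP; lia.
Qed.

Lemma bigcup_condexp_band s :
  \bigcup_k condexp_band s k = [set x | 1 <= s * C x].
Proof.
apply/seteqP; split => x /=.
  by move=> [k _ /andP[+ _]]; apply: le_trans; rewrite ler1n.
move=> ge1; have y0 : 0 <= s * C x := le_trans ler01 ge1.
have /andP[lo hi] := truncn_itv y0.
have t0 : (0 < Num.truncn (s * C x))%N by rewrite truncn_gt_nat.
by exists (Num.truncn (s * C x)).-1 => //; rewrite /condexp_band /= prednK // lo hi.
Qed.

Lemma condexp_band_sqr_le s k : s ^+ 2 = 1 ->
  (\int[P]_(x in condexp_band s k) (C x ^+ 2)%:E <=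
   4%:E * \int[P]_(x in condexp_band s k) (T x ^+ 2)%:E)%E.
Proof.
move=> s2; have GB := sigma_gen_condexp_band s k.
have mB := sigma_gen_measurable GB.
have := condexp_level_set_sqr_le s2 (ler0n _ k.+1) GB (fun x Bx => (andP Bx).1).
rewrite /Rintegral => hB.
apply: (@le_trans _ _ (\int[P]_(x in condexp_band s k) (k.+2%:R ^+ 2 : R)%:E)%E).
  apply: ge0_le_integral => //.
  - by move=> x _; rewrite lee_fin sqr_ge0.
  - by apply/measurable_EFinP/measurable_funX/measurable_funTS; exact: (measurable_condexp hC).
  - move=> x /andP[lo hi].
    have -> : C x ^+ 2 = (s * C x) ^+ 2 by rewrite exprMn s2 mul1r.
    have sC0 : 0 <= s * C x by apply: le_trans lo.
    by rewrite lee_fin ler_sqr ?nnegrE // ltW.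
rewrite integral_cst // -[X in (_ * X <= _)%E]fineK ?fin_num_measure //.
rewrite -(fineK (integrable_fin_num mB (integrable_on GB iT2))) -!EFinM lee_fin.
have PB0 : 0 <= fine (P (condexp_band s k)) by apply: fine_ge0.
move: hB; rewrite -!natr1; have k0 : 0 <= k%:R :> R by [].
nra.
Qed.

Lemma condexp_sqr_tail_le s : s ^+ 2 = 1 ->
  (\int[P]_(x in [set x | (1 <= s * C x)%R]) (C x ^+ 2)%:E <=
   4%:E * \int[P]_x (T x ^+ 2)%:E)%E.
Proof.
move=> s2; have mB := measurable_condexp_band s.
have sqr_ge0E (f : Omega -> R) x : (0 <= (f x ^+ 2)%:E)%E by rewrite lee_fin sqr_ge0.
have mT2 : measurable_fun setT (fun x => (T x ^+ 2)%:E).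
  by apply/measurable_EFinP/measurable_funX.
have mC2 : measurable_fun setT (fun x => (C x ^+ 2)%:E).
  by apply/measurable_EFinP/measurable_funX; exact: (measurable_condexp hC).
rewrite -bigcup_condexp_band ge0_integral_bigcup //; last 2 first.
- exact: measurable_funTS mC2.
- exact: trivIset_condexp_band.
apply: (@le_trans _ _ (\sum_(k <oo)
    (4%:E * \int[P]_(x in condexp_band s k) (T x ^+ 2)%:E))%E).
  apply: lee_nneseries => [k _ _|k _]; last exact: condexp_band_sqr_le.
  by apply: integral_ge0 => x _; exact: sqr_ge0E.
rewrite nneseriesZl; last by move=> k _; apply: integral_ge0 => x _; exact: sqr_ge0E.
rewrite -ge0_integral_bigcup //; last 2 first.
- exact: measurable_funTS mT2.
- exact: trivIset_condexp_band.
by rewrite lee_wpmul2l // ge0_subset_integral //; exact: bigcupT_measurable.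
Qed.

Lemma integrable_condexp_sqr : P.-integrable setT (EFin \o (fun x => C x ^+ 2)).
Proof.
have mC2 : measurable_fun setT (fun x => (C x ^+ 2)%:E).
  by apply/measurable_EFinP/measurable_funX; exact: (measurable_condexp hC).
apply/integrableP; split => //.
pose tail s := [set x | 1 <= s * C x].
have mtail s : measurable (tail s).
  rewrite /tail -bigcup_condexp_band; exact/bigcupT_measurable/measurable_condexp_band.
pose f s := (fun x => (C x ^+ 2)%:E) \_ (tail s).
have mf s : measurable_fun setT (f s).
  exact/(measurable_restrictT _ (mtail s))/measurable_funTS.
have f0 s x : (0 <= f s x)%E.
  by rewrite /f patchE; case: ifPn => _ //; rewrite lee_fin sqr_ge0.
apply: (@le_lt_trans _ _ (\int[P]_x (f 1%R x + f (-1)%R x + 1)))%E.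
  apply: ge0_le_integral => //.
  - exact: measurableT_comp.
  - by apply: emeasurable_funD => //; exact: emeasurable_funD.
  - move=> x _; rewrite gee0_abs ?lee_fin ?sqr_ge0 // /f !patchE.
    have := sqr_ge0 (C x).
    case: ifPn => h1; case: ifPn => h2; rewrite -?EFinD ?add0e ?adde0 ?lee_fin; try lra.
    move: h1 h2; rewrite !notin_setE /tail /= mul1r mulN1r.
    by move=> /negP; rewrite -ltNge => lt1 /negP; rewrite -ltNge => gtN1; nra.
rewrite ge0_integralD //; last 2 first.
- by move=> x _; rewrite adde_ge0.
- exact: emeasurable_funD.
rewrite ge0_integralD // -!integral_mkcond.
have T2fin : (4%:E * \int[P]_x (T x ^+ 2)%:E < +oo)%E.
  by rewrite lte_mul_pinfty //; apply: integrable_lty.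
apply: lte_add_pinfty; last first.
  by rewrite integral_cst // mul1e -ge0_fin_numE //; exact: fin_num_measure.
apply: lte_add_pinfty; apply: le_lt_trans T2fin; apply: condexp_sqr_tail_le.
  exact: expr1n.
by rewrite sqrrN expr1n.
Qed.

Lemma integrable_sub_condexp_sqr :
  P.-integrable setT (EFin \o (fun x => (T x - C x) ^+ 2)).
Proof. exact: integrable_sqrB mT (measurable_condexp hC) iT2 integrable_condexp_sqr. Qed.

Lemma LT_condexp :
  LT P T C = Defs.variance P T - expect P (fun x => (T x - C x) ^+ 2).
Proof.
have centred : expect P (fun x => T x - C x) = 0.
  rewrite expectB // /expect -/(Rintegral P setT C) -/(Rintegral P setT T).
  by rewrite condexp_Rintegral ?subrr //; exact: (@measurableT _ OmegaG).
rewrite /LT /Defs.variance centred; congr (_ - _).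
by under eq_fun do rewrite subr0.
Qed.

End square_integrable_condexp.

End generated_sigma_algebra.

Section features.
Context d (Omega : measurableType d) (n : nat) (dX : 'I_n -> measure_display).
Variables (Xsp : forall i, measurableType (dX i)) (X : forall i, Omega -> Xsp i).

Definition sigmaX_gen (S : {set 'I_n}) : set (set Omega) :=
  [set A | exists s, s \in S /\
     exists B : set (Xsp s), measurable B /\ A = X s @^-1` B].

Lemma sigmaX_gen_measurable S :
  (forall i, measurable_fun setT (X i)) -> sigmaX_gen S `<=` measurable.
Proof.
move=> mX A [s [_ [B [mB ->]]]].
by have := mX s measurableT B mB; rewrite setTI.
Qed.

Lemma sigmaX_subset (S S' : {set 'I_n}) :
  S \subset S' -> sigmaX X S `<=` sigmaX X S'.
Proof.
move=> /fintype.subsetP SS'; apply: sub_sigma_algebra2 => A [s [Ss hA]].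
by exists s; split => //; exact: SS'.
Qed.

End features.

Theorem proposition1
  (d : measure_display) (Omega : measurableType d) (R : realType)
  (P : probability Omega R)
  (n : nat) (dX : 'I_n -> measure_display)
  (Xsp : forall i, measurableType (dX i))
  (X : forall i, Omega -> Xsp i)
  (T : Omega -> R)
  (F : Omega -> R)          (* the random variable f(X) *)
  (V : {set 'I_n} -> Omega -> R)  (* V S = v_{f(X)}(S) = E[f(X) | X_S] *)
  (C : {set 'I_n} -> Omega -> R)  (* C S = E[T | X_S] *)
  (pi : {perm 'I_n}) (j : 'I_n) :
  (forall i, measurable_fun setT (X i)) ->
  measurable_fun setT T ->
  P.-integrable setT (fun x => (T x ^+ 2)%:E) ->
  is_condexp P (sigmaX X [set: 'I_n]) T F ->
  (forall S, is_condexp P (sigmaX X S) F (V S)) ->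
  (forall S, is_condexp P (sigmaX X S) T (C S)) ->
  let Rj : {set 'I_n} := [set i : 'I_n | (pi i < pi j)%N]%SET in
  let phi := fun x => (T x - V (j |: Rj) x) ^+ 2 - (T x - V Rj x) ^+ 2 in
  let L := fun S => LT P T (C S) in
  let W := fun A B => L (A :|: B) - L A - L B in
  - expect P phi = L [set j]%SET + W [set j]%SET Rj.
Proof.
move=> mX mT iT2 hF hV hC Rj phi L W.
have genX S : sigmaX_gen X S `<=` measurable := sigmaX_gen_measurable mX.
have V_C S : {ae P, forall x, V S x = C S x}.
  have hVT := is_condexp_tower (sigmaX_subset (X := X) (finset.subsetT S)) hF (hV S).
  exact: (condexp_ae_unique (genX S) hVT (hC S)).
have iTC S := integrable_sub_condexp_sqr (genX S) mT iT2 (hC S).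
have msqr (U : Omega -> R) :
    measurable_fun setT U -> measurable_fun setT (fun x => (T x - U x) ^+ 2).
  by move=> mU; apply/measurable_funX/measurable_funB.
have -> : expect P phi = expect P (fun x => (T x - C (j |: Rj) x) ^+ 2)
    - expect P (fun x => (T x - C Rj x) ^+ 2).
  rewrite -expectB; try exact: iTC.
  apply: expect_ae_eq.
  - by apply: measurable_funB; apply/msqr/measurable_condexp; exact: hV.
  - by apply: measurable_funB; apply/msqr/measurable_condexp; exact: hC.
  - by apply: filterS2 (V_C (j |: Rj)) (V_C Rj) => x e1 e2; rewrite /phi e1 e2.
rewrite /W /L !(LT_condexp mT iT2 (hC _)).
ring.
Qed.
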